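(* Let $G$ be a finite group, $\pi:G\to\mathcal U(H_\pi)$ and $\rho:G\to\mathcal U(H_\rho)$ irreducible unitary representations, and $\psi\in H_\pi\otimes H_\rho$ a marginally cyclic unit vector such that $$\mathrm{span}\{(\pi(s)\otimes\rho(t))\psi\psi^*(\pi(s)\otimes\rho(t))^*:s,t\in G\}=\mathcal B(H_\pi\otimes H_\rho).$$ Let $u(s,t)=\langle(\pi(s)\otimes\rho(t))\psi,\psi\rangle$, $\tilde E_{s,s',g,g'}=\delta_{s,g}\delta_{s',g'}\pi(s^{-1}s')$ and $\tilde F_{t,t',h,h'}=\delta_{t,h}\delta_{t',h'}\rho(t^{-1}t')$. Then the model $(H_\pi\otimes H_\rho,\tilde E,\tilde F,\psi)$ is a self-test for the class $\mathfrak M(u)$: for every full rank unitary model $(H_A\otimes H_B,E,F,\xi)$ whose QNS correlation equals $\Theta(u)$, there exist Hilbert spaces $H_A^{\rm aux},H_B^{\rm aux}$, isometries $T_A:H_A\to H_\pi\otimes H_A^{\rm aux}$, $T_B:H_B\to H_\rho\otimes H_B^{\rm aux}$ and a unit vector $\xi^{\rm aux}\in H_A^{\rm aux}\otimes H_B^{\rm aux}$ such that $$(T_A\otimes T_B)(E_{s,s',g,g'}\otimes F_{t,t',h,h'})\xi=\big((\tilde E_{s,s',g,g'}\otimes\tilde F_{t,t',h,h'})\psi\big)\otimes\xi^{\rm aux}$$ for all $s,s',g,g',t,t',h,h'\in G$ (with the obvious reshuffling of tensor factors).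
   Context: Vectors $\psi\in H\otimes K$ (finite dimensional) are marginally cyclic if $(\mathcal B(H)\otimes1)\psi=H\otimes K=(1\otimes\mathcal B(K))\psi$ (equivalently, $\psi$ has full Schmidt rank). For a finite set $G$, $e_{s,s'}$ are the matrix units of $\mathcal B(\ell^2(G))$, and the Schur multiplier channel $\Theta(u)$ on $\mathcal B(\ell^2(G))\otimes\mathcal B(\ell^2(G))$ is given by $\Theta(u)(e_{s,s'}\otimes e_{t,t'})=u(s^{-1}s',t^{-1}t')e_{s,s'}\otimes e_{t,t'}$. A unistochastic operator matrix (USOM) over $G$ on a Hilbert space $H$ is a block operator matrix $(E_{s,s',g,g'})_{s,s',g,g'\in G}$ with $E_{s,s',g,g'}=U_{g,s}^*U_{g',s'}$ for some block unitary $U=(U_{g,s})$ on $H^G=\oplus_{g\in G}H$. A unitary model is $(H_A\otimes H_B,E,F,\xi)$ with $H_A,H_B$ finite dimensional, $E$ a USOM on $H_A$, $F$ a USOM on $H_B$, $\xi$ a unit vector; it is full rank if the reduced density operators $(\mathrm{id}\otimes\mathrm{Tr})(\xi\xi^* )$ and $(\mathrm{Tr}\otimes\mathrm{id})(\xi\xi^* )$ are invertible. Its QNS correlation is the map $\Gamma$ with $\Gamma(e_{s,s'}\otimes e_{t,t'})=\sum_{g,g',h,h'}\langle(E_{s,s',g,g'}\otimes F_{t,t',h,h'})\xi,\xi\rangle e_{g,g'}\otimes e_{h,h'}$. *)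

(* Finite-dimensional Hilbert spaces are C^d, represented by
   column vectors 'cV[C]_d; operators are matrices; the tensor product of
   C^n and C^m is C^(n*m) via the Kronecker product [tensmx] (notation *t)
   of mathcomp-real-closed. *)
From HB Require Import structures.
From mathcomp Require Import all_boot all_order all_algebra all_fingroup.
From mathcomp Require Import mxrepresentation.
From mathcomp Require Import reals.
From mathcomp.real_closed Require Export complex mxtens.

Set Implicit Arguments.
Unset Strict Implicit.
Unset Printing Implicit Defensive.

Import GRing.Theory Num.Theory.
Local Open Scope ring_scope.

Section Defs.
Variable C : numClosedFieldType.

Definition hadj {p q} (A : 'M[C]_(p, q)) : 'M[C]_(q, p) := (map_mx Num.conj A)^T.

(* inner product <v, w> = w^* v (linear in the first argument) *)
Definition inner {p} (v w : 'cV[C]_p) : C := (hadj w *m v) 0 0.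

Definition unit_vec {p} (v : 'cV[C]_p) : Prop := inner v v = 1.

Definition isometry_mx {p q} (T : 'M[C]_(p, q)) : Prop := hadj T *m T = 1%:M.

Definition unitary_mx {p} (U : 'M[C]_p) : Prop :=
  hadj U *m U = 1%:M /\ U *m hadj U = 1%:M.

Definition unitary_rep {gT : finGroupType} {n}
  (r : mx_representation C [set: gT] n) : Prop :=
  forall s : gT, unitary_mx (r s).

Definition marginally_cyclic {n m} (psi : 'cV[C]_(n * m)) : Prop :=
  (forall v : 'cV[C]_(n * m), exists A : 'M[C]_n, v = (A *t (1%:M : 'M[C]_m)) *m psi)
  /\ (forall v : 'cV[C]_(n * m), exists B : 'M[C]_m, v = ((1%:M : 'M[C]_n) *t B) *m psi).

(* Block unitary U = (U_{g,s}) on H^G = (+)_{g in G} H, H = C^d. *)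
Definition block_unitary {gT : finGroupType} {d} (U : gT -> gT -> 'M[C]_d) : Prop :=
  (forall s s' : gT, \sum_(g : gT) hadj (U g s) *m U g s' = (s == s')%:R *: 1%:M)
  /\ (forall g g' : gT, \sum_(s : gT) U g s *m hadj (U g' s) = (g == g')%:R *: 1%:M).

Definition USOM {gT : finGroupType} {d} (E : gT -> gT -> gT -> gT -> 'M[C]_d) : Prop :=
  exists U : gT -> gT -> 'M[C]_d, block_unitary U /\
    forall s s' g g', E s s' g g' = hadj (U g s) *m U g' s'.

Definition red_density_A {dA dB} (xi : 'cV[C]_(dA * dB)) : 'M[C]_dA :=
  \matrix_(i, i') \sum_(j < dB)
     xi (mxtens_index (i, j)) 0 * (xi (mxtens_index (i', j)) 0)^*.
Definition red_density_B {dA dB} (xi : 'cV[C]_(dA * dB)) : 'M[C]_dB :=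
  \matrix_(j, j') \sum_(i < dA)
     xi (mxtens_index (i, j)) 0 * (xi (mxtens_index (i, j')) 0)^*.

(* A linear map Phi on B(l^2(G)) (x) B(l^2(G)) is encoded by its coefficients in
   the matrix-unit basis:  Phi s s' t t' g g' h h' is the coefficient of
   e_{g,g'} (x) e_{h,h'} in Phi(e_{s,s'} (x) e_{t,t'}). *)
Definition qns_map (gT : finGroupType) :=
  gT -> gT -> gT -> gT -> gT -> gT -> gT -> gT -> C.

Definition schur_channel {gT : finGroupType} (u : gT -> gT -> C) : qns_map gT :=
  fun s s' t t' g g' h h' =>
    if [&& g == s, g' == s', h == t & h' == t'] then u (s^-1 * s')%g (t^-1 * t')%g
    else 0.

Definition unitary_model {gT : finGroupType} {dA dB}
  (E : gT -> gT -> gT -> gT -> 'M[C]_dA) (F : gT -> gT -> gT -> gT -> 'M[C]_dB)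
  (xi : 'cV[C]_(dA * dB)) : Prop :=
  USOM E /\ USOM F /\ unit_vec xi.

Definition full_rank {dA dB} (xi : 'cV[C]_(dA * dB)) : Prop :=
  red_density_A xi \in unitmx /\ red_density_B xi \in unitmx.

Definition qns_correlation {gT : finGroupType} {dA dB}
  (E : gT -> gT -> gT -> gT -> 'M[C]_dA) (F : gT -> gT -> gT -> gT -> 'M[C]_dB)
  (xi : 'cV[C]_(dA * dB)) : qns_map gT :=
  fun s s' t t' g g' h h' => inner ((E s s' g g' *t F t t' h h') *m xi) xi.

(* Reshuffling (H_pi (x) H_rho) (x) (H_A^aux (x) H_B^aux)
   -> (H_pi (x) H_A^aux) (x) (H_rho (x) H_B^aux). *)
Definition reshuffle {n m a b k} (M : 'M[C]_((n * m) * (a * b), k))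
  : 'M[C]_((n * a) * (m * b), k) :=
  \matrix_(i, j)
    M (mxtens_index
         (mxtens_index ((mxtens_unindex (mxtens_unindex i).1).1,
                        (mxtens_unindex (mxtens_unindex i).2).1),
          mxtens_index ((mxtens_unindex (mxtens_unindex i).1).2,
                        (mxtens_unindex (mxtens_unindex i).2).2))) j.

End Defs.

From HB Require Import structures.
From mathcomp Require Import all_boot all_order all_algebra all_fingroup.
From mathcomp Require Import mxrepresentation.
From mathcomp Require Import reals.
From mathcomp.real_closed Require Import complex mxtens.

(* The correlation Theta(u) forces the block unitaries of the model to be
   block diagonal, E_{s,s',g,g'} = delta_{s,g} delta_{s',g'} U_s^* U_s', and
   gives the vectors (U_s (x) V_t) xi and (pi(s) (x) rho(t)) psi the same Gram
   matrix.  The latter span H_pi (x) H_rho (marginal cyclicity plus Burnside's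
   theorem), so some isometry W maps each to the former.  Full rank of xi makes
   W intertwine pi(g) (x) 1 with A_g (x) 1, where A_g = U_g U_1^*, so g |-> A_g
   extends to a unital *-homomorphism Phi_A of M_n, which is an amplification:
   T_A Phi_A(X) = (X (x) 1) T_A for an isometry T_A; likewise on Bob's side.
   The isometry (T_A (x) T_B) W then commutes with all X (x) Y, hence is
   v |-> v (x) xi_aux, and T_A U_1, T_B V_1 are the local isometries. *)

Set Implicit Arguments.
Unset Strict Implicit.
Unset Printing Implicit Defensive.
Import GRing.Theory Num.Theory.
Local Open Scope ring_scope.

Section AdjointTensor.
Variable C : numClosedFieldType.
Implicit Types p q r : nat.

Lemma hadjE p q (A : 'M[C]_(p, q)) i j : hadj A i j = (A j i)^*.
Proof. by rewrite !mxE. Qed.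

Lemma hadjM p q r (A : 'M[C]_(p, q)) (B : 'M[C]_(q, r)) :
  hadj (A *m B) = hadj B *m hadj A.
Proof. by rewrite /hadj map_mxM trmx_mul. Qed.

Lemma hadjK p q (A : 'M[C]_(p, q)) : hadj (hadj A) = A.
Proof. by apply/matrixP=> i j; rewrite !mxE conjCK. Qed.

Lemma hadjD p q (A B : 'M[C]_(p, q)) : hadj (A + B) = hadj A + hadj B.
Proof. by apply/matrixP=> i j; rewrite !mxE rmorphD. Qed.

Lemma hadjZ p q c (A : 'M[C]_(p, q)) : hadj (c *: A) = c^* *: hadj A.
Proof. by apply/matrixP=> i j; rewrite !mxE rmorphM. Qed.

Lemma hadj0 p q : hadj (0 : 'M[C]_(p, q)) = 0.
Proof. by apply/matrixP=> i j; rewrite !mxE rmorph0. Qed.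

Lemma hadj1 p : hadj (1%:M : 'M[C]_p) = 1%:M.
Proof. by rewrite /hadj map_scalar_mx rmorph1 tr_scalar_mx. Qed.

Lemma hadj_sum p q (I : finType) (F : I -> 'M[C]_(p, q)) :
  hadj (\sum_i F i) = \sum_i hadj (F i).
Proof. exact: (big_morph _ (@hadjD p q) (@hadj0 p q)). Qed.

Lemma hadj_tens p q p' q' (A : 'M[C]_(p, q)) (B : 'M[C]_(p', q')) :
  hadj (A *t B) = hadj A *t hadj B.
Proof. by rewrite /hadj map_mxT trmx_tens. Qed.

Lemma hadj_delta p q (i : 'I_p) (j : 'I_q) :
  hadj (delta_mx i j : 'M[C]_(p, q)) = delta_mx j i.
Proof. by apply/matrixP=> a b; rewrite !mxE rmorph_nat andbC. Qed.

Lemma hadj_mulmx_eq0 p q (M : 'M[C]_(p, q)) : hadj M *m M = 0 -> M = 0.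
Proof.
move=> /matrixP M0; apply/matrixP=> i j; rewrite mxE.
have /eqP : \sum_k (M k j)^* * M k j = 0.
  transitivity ((hadj M *m M) j j); last by rewrite M0 mxE.
  by rewrite mxE; apply: eq_bigr => k _; rewrite !mxE.
rewrite psumr_eq0 => [/allP/(_ i (mem_index_enum i))|k _]; last first.
  by rewrite mulrC mul_conjC_ge0.
by rewrite mulrC mul_conjC_eq0 => /eqP.
Qed.

Lemma tensmxDl p q p' q' (A A' : 'M[C]_(p, q)) (B : 'M[C]_(p', q')) :
  (A + A') *t B = A *t B + A' *t B.
Proof. by apply/matrixP=> i j; rewrite !mxE mulrDl. Qed.

Lemma tensmxDr p q p' q' (A : 'M[C]_(p, q)) (B B' : 'M[C]_(p', q')) :
  A *t (B + B') = A *t B + A *t B'.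
Proof. by apply/matrixP=> i j; rewrite !mxE mulrDr. Qed.

Lemma tensmxZl p q p' q' c (A : 'M[C]_(p, q)) (B : 'M[C]_(p', q')) :
  (c *: A) *t B = c *: (A *t B).
Proof. by apply/matrixP=> i j; rewrite !mxE mulrA. Qed.

Lemma tensmxZr p q p' q' c (A : 'M[C]_(p, q)) (B : 'M[C]_(p', q')) :
  A *t (c *: B) = c *: (A *t B).
Proof. by apply/matrixP=> i j; rewrite !mxE mulrCA. Qed.

Lemma tensmx_suml p q p' q' (I : finType) (F : I -> 'M[C]_(p, q)) (B : 'M[C]_(p', q')) :
  (\sum_i F i) *t B = \sum_i (F i *t B).
Proof. exact: (big_morph (fun A => A *t B) (fun A A' => tensmxDl A A' B) (tens0mx _)). Qed.

Lemma tensmx_sumr p q p' q' (I : finType) (A : 'M[C]_(p, q)) (F : I -> 'M[C]_(p', q')) :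
  A *t (\sum_i F i) = \sum_i (A *t F i).
Proof. exact: (big_morph (fun B => A *t B) (tensmxDr A) (tensmx0 _)). Qed.

Lemma tensmx11 p q : (1%:M : 'M[C]_p) *t (1%:M : 'M[C]_q) = 1%:M.
Proof.
apply/matrixP=> i j; case: (mxtens_indexP i) => a b; case: (mxtens_indexP j) => c d.
rewrite tensmxE !mxE (inj_eq (can_inj (@mxtens_indexK p q))) xpair_eqE.
by case: (a == c); case: (b == d); rewrite /= ?(mul1r, mul0r).
Qed.

End AdjointTensor.

Section Reshape.
Variable C : numClosedFieldType.
Implicit Types p q r : nat.

Lemma big_mxtens p q (F : 'I_(p * q) -> C) :
  \sum_k F k = \sum_(i < p) \sum_(j < q) F (mxtens_index (i, j)).
Proof.
rewrite pair_big /=; apply: reindex; exists (@mxtens_unindex p q) => k _.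
  by rewrite mxtens_indexK; case: k.
by rewrite mxtens_unindexK.
Qed.

Lemma big_delta (I : finType) (i0 : I) (F : I -> C) :
  \sum_i (i == i0)%:R * F i = F i0.
Proof.
rewrite (bigD1 i0) //= eqxx mul1r big1 ?addr0 // => i /negPf->.
by rewrite mul0r.
Qed.

Lemma mxtens_index_eq p q (i i' : 'I_p) (j j' : 'I_q) :
  (mxtens_index (i, j) == mxtens_index (i', j')) = (i == i') && (j == j').
Proof. by rewrite (inj_eq (can_inj (@mxtens_indexK p q))) xpair_eqE. Qed.

Lemma tens_delta_mx p q p' q' (i : 'I_p) (j : 'I_q) (k : 'I_p') (l : 'I_q') :
  delta_mx i j *t delta_mx k l
  = delta_mx (mxtens_index (i, k)) (mxtens_index (j, l)) :> 'M[C]_(_, _).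
Proof.
apply/matrixP=> a b; case: (mxtens_indexP a) => i' k'; case: (mxtens_indexP b) => j' l'.
rewrite tensmxE !mxE !mxtens_index_eq.
by case: (i' == i); case: (j' == j); case: (k' == k); case: (l' == l);
  rewrite /= ?(mul1r, mul0r).
Qed.

Lemma mulmx_delta_entry p q r (M : 'M[C]_(p, q)) (i : 'I_q) (j : 'I_r) a b :
  (M *m delta_mx i j) a b = (b == j)%:R * M a i.
Proof.
rewrite mxE (bigD1 i) //= big1 ?addr0 => [|k /negPf nki]; last by rewrite mxE nki mulr0.
by rewrite mxE eqxx mulrC.
Qed.

Lemma delta_mulmx_entry p q r (M : 'M[C]_(q, r)) (i : 'I_p) (j : 'I_q) a b :
  (delta_mx i j *m M) a b = (a == i)%:R * M j b.
Proof.
rewrite mxE (bigD1 j) //= big1 ?addr0 => [|k /negPf nkj]; last by rewrite mxE nkj andbF mul0r.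
by rewrite mxE eqxx andbT.
Qed.

Lemma delta_mulmx p q r (i : 'I_p) (j : 'I_q) (M : 'M[C]_(q, r)) :
  delta_mx i j *m M = \sum_k M j k *: delta_mx i k.
Proof.
apply/matrixP=> a b; rewrite delta_mulmx_entry summxE.
under eq_bigr do rewrite !mxE.
rewrite -(big_delta b (fun k => (a == i)%:R * M j k)); apply: eq_bigr => k _.
by rewrite -mulnb natrM (eq_sym k) mulrC mulrAC [RHS]mulrC.
Qed.

Lemma tens_delta1_mulmx_entry p q p' q' a b c (i : 'I_p) (k : 'I_q) (j : 'I_p') (l : 'I_q')
    (r : 'I_a) (r' : 'I_b) (M : 'M[C]_((q * a) * (q' * b), c)) x :
  (((delta_mx i k *t 1%:M) *t (delta_mx j l *t 1%:M)) *m M)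
    (mxtens_index (mxtens_index (i, r), mxtens_index (j, r'))) x
  = M (mxtens_index (mxtens_index (k, r), mxtens_index (l, r'))) x.
Proof.
rewrite !mx1_sum_delta !tensmx_sumr.
under eq_bigr do rewrite tensmx_suml.
rewrite mulmx_suml summxE -(big_delta r' (fun s' => M _ x)); apply: eq_bigr => s' _.
rewrite mulmx_suml summxE -(big_delta r (fun s => _ * M _ x)); apply: eq_bigr => s _.
rewrite !tens_delta_mx delta_mulmx_entry !mxtens_index_eq !eqxx /=.
by rewrite -mulnb natrM -mulrA (eq_sym r) (eq_sym r').
Qed.

Definition tens_reshape p q (v : 'cV[C]_(p * q)) : 'M[C]_(p, q) :=
  \matrix_(i, j) v (mxtens_index (i, j)) 0.

Lemma tens_reshape_mul p q p' q' (M : 'M[C]_(p', p)) (N : 'M[C]_(q', q)) v :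
  tens_reshape ((M *t N) *m v) = M *m tens_reshape v *m N^T.
Proof.
apply/matrixP=> i j; rewrite !mxE big_mxtens exchange_big /=.
apply: eq_bigr => b _; rewrite !mxE mulr_suml; apply: eq_bigr => a _.
by rewrite tensmxE !mxE mulrAC.
Qed.

Lemma red_density_AE p q (xi : 'cV[C]_(p * q)) :
  red_density_A xi = tens_reshape xi *m hadj (tens_reshape xi).
Proof. by apply/matrixP=> i i'; rewrite !mxE; apply: eq_bigr => j _; rewrite !mxE. Qed.

Lemma red_density_BE p q (xi : 'cV[C]_(p * q)) :
  red_density_B xi = (tens_reshape xi)^T *m hadj (tens_reshape xi)^T.
Proof. by apply/matrixP=> i i'; rewrite !mxE; apply: eq_bigr => j _; rewrite !mxE. Qed.

Lemma full_rankA_cancel p q p' (xi : 'cV[C]_(p * q)) (M M' : 'M[C]_(p', p)) :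
  red_density_A xi \in unitmx ->
  (M *t (1%:M : 'M_q)) *m xi = (M' *t 1%:M) *m xi -> M = M'.
Proof.
move=> xi_unit /(congr1 (@tens_reshape _ _)); rewrite !tens_reshape_mul trmx1 !mulmx1.
by move=> eqMM'; rewrite -[M]mulmx1 -[M']mulmx1 -(mulmxV xi_unit) red_density_AE !mulmxA eqMM'.
Qed.

Lemma full_rankB_cancel p q q' (xi : 'cV[C]_(p * q)) (N N' : 'M[C]_(q', q)) :
  red_density_B xi \in unitmx ->
  ((1%:M : 'M_p) *t N) *m xi = (1%:M *t N') *m xi -> N = N'.
Proof.
move=> xi_unit /(congr1 (@tens_reshape _ _)); rewrite !tens_reshape_mul !mul1mx.
move=> /(congr1 trmx); rewrite !trmx_mul !trmxK => eqNN'.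
by rewrite -[N]mulmx1 -[N']mulmx1 -(mulmxV xi_unit) red_density_BE !mulmxA eqNN'.
Qed.

Lemma reshuffle0 n m a b k :
  reshuffle (0 : 'M[C]_((n * m) * (a * b), k)) = 0.
Proof. by apply/matrixP=> i j; rewrite !mxE. Qed.

End Reshape.

Section InnerProduct.
Variable C : numClosedFieldType.
Implicit Types p q : nat.

Lemma inner_sum (I : finType) p (M : I -> 'M[C]_p) (v : 'cV[C]_p) :
  \sum_i inner (M i *m v) v = inner ((\sum_i M i) *m v) v.
Proof. by rewrite /inner mulmx_suml mulmx_sumr summxE. Qed.

Lemma inner_hadj_mul p q (M N : 'M[C]_(q, p)) (v : 'cV[C]_p) :
  inner ((hadj M *m N) *m v) v = (hadj (M *m v) *m (N *m v)) 0 0.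
Proof. by rewrite /inner hadjM !mulmxA. Qed.

Lemma inner_hadj_mul_eq0 p q (M : 'M[C]_(q, p)) (v : 'cV[C]_p) :
  inner ((hadj M *m M) *m v) v = 0 -> M *m v = 0.
Proof.
by rewrite inner_hadj_mul => Mv0; apply: hadj_mulmx_eq0; rewrite [LHS]mx11_scalar Mv0 raddf0.
Qed.

Lemma unit_vec_dim_gt0 p (v : 'cV[C]_p) : unit_vec v -> (0 < p)%N.
Proof.
by case: p v => // v; rewrite /unit_vec /inner mxE big_ord0 => /esym/eqP; rewrite oner_eq0.
Qed.

Lemma mulmx_cV_ext p q (M M' : 'M[C]_(p, q)) :
  (forall v : 'cV[C]_q, M *m v = M' *m v) -> M = M'.
Proof.
move=> MM'; apply/matrixP=> i j.
by have /matrixP/(_ i 0) := MM' (delta_mx j 0); rewrite -!colE !mxE.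
Qed.

Section GramIsometry.
Variables (I : finType) (p q : nat) (x : I -> 'cV[C]_p) (y : I -> 'cV[C]_q).
Hypotheses (gram_xy : forall i j, hadj (x i) *m x j = hadj (y i) *m y j)
  (y_span : forall v, exists c : I -> C, v = \sum_i c i *: y i).

Lemma gram_comb k k' (c : I -> 'M[C]_(1, k)) (c' : I -> 'M[C]_(1, k')) :
  hadj (\sum_i x i *m c i) *m (\sum_j x j *m c' j)
  = hadj (\sum_i y i *m c i) *m (\sum_j y j *m c' j).
Proof.
rewrite !hadj_sum !mulmx_suml; apply: eq_bigr => i _; rewrite !mulmx_sumr.
by apply: eq_bigr => j _; rewrite !hadjM -!mulmxA (mulmxA (hadj (x i))) gram_xy !mulmxA.
Qed.

Lemma span_frame : exists r : I -> 'rV[C]_q, \sum_i y i *m r i = 1%:M.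
Proof.
have [c cP] := fin_all_exists (fun k : 'I_q => y_span (delta_mx k 0)).
exists (fun i => \sum_k c k i *: delta_mx 0 k).
rewrite mx1_sum_delta; under eq_bigr do rewrite mulmx_sumr.
rewrite exchange_big /=; apply: eq_bigr => k _.
rewrite -(@mul_delta_mx C q 1 q 0 k k) cP mulmx_suml.
by apply: eq_bigr => i _; rewrite -scalemxAr scalemxAl.
Qed.

(* W = \sum_i x_i r_i for a dual frame r of y: by gram_comb, W y_j - x_j has
   the norm of the corresponding combination of the y's, which vanishes. *)
Lemma gram_isometry : exists2 W : 'M[C]_(p, q), isometry_mx W & forall i, W *m y i = x i.
Proof.
have [r frame] := span_frame; exists (\sum_i x i *m r i).
  by rewrite /isometry_mx gram_comb frame hadj1 mul1mx.
move=> j; apply/eqP; rewrite -subr_eq0; apply/eqP.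
set c := fun i => r i *m y j - (i == j)%:R%:M.
have comb k (z : I -> 'cV[C]_k) : (\sum_i z i *m r i) *m y j - z j = \sum_i z i *m c i.
  rewrite /c; under [RHS]eq_bigr do rewrite mulmxBr mulmxA.
  rewrite sumrB mulmx_suml; congr (_ - _).
  rewrite (bigD1 j) //= eqxx mul_mx_scalar scale1r big1 ?addr0 // => i /negPf->.
  by rewrite mul_mx_scalar scale0r.
rewrite comb; apply: hadj_mulmx_eq0.
by rewrite gram_comb -comb frame mul1mx subrr mulmx0.
Qed.

End GramIsometry.
End InnerProduct.

Section Amplification.
Variables (C : numClosedFieldType) (n d : nat) (Phi : {linear 'M[C]_n -> 'M[C]_d}).
Hypotheses (PhiM : forall X Y, Phi (X *m Y) = Phi X *m Phi Y)
  (Phi1 : Phi 1%:M = 1%:M) (Phi_hadj : forall X, Phi (hadj X) = hadj (Phi X)).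
Variable i0 : 'I_n.

(* T e = \sum_i e_i (x) Phi(E_{i0,i}) e, whose Gram matrix is
   \sum_i Phi(E_{i,i0} E_{i0,i}) = Phi 1 = 1. *)
Definition amplification : 'M[C]_(n * d, d) :=
  \matrix_(k, j) Phi (delta_mx i0 (mxtens_unindex k).1) (mxtens_unindex k).2 j.

Lemma amplification_iso : isometry_mx amplification.
Proof.
apply/matrixP=> j j'; rewrite mxE big_mxtens.
transitivity (\sum_i (hadj (Phi (delta_mx i0 i)) *m Phi (delta_mx i0 i)) j j').
  apply: eq_bigr => i _; rewrite mxE; apply: eq_bigr => k _.
  by rewrite !mxE mxtens_indexK.
rewrite -summxE.
under eq_bigr do rewrite -Phi_hadj -PhiM hadj_delta mul_delta_mx.
by rewrite -linear_sum -mx1_sum_delta Phi1.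
Qed.

Lemma amplificationP X : amplification *m Phi X = (X *t 1%:M) *m amplification.
Proof.
apply/matrixP=> k j; case: (mxtens_indexP k) => i q.
transitivity ((Phi (delta_mx i0 i) *m Phi X) q j).
  by rewrite !mxE; apply: eq_bigr => p _; rewrite !mxE mxtens_indexK.
rewrite -PhiM delta_mulmx linear_sum summxE mxE big_mxtens; apply: eq_bigr => i' _.
rewrite linearZ mxE -(big_delta q (fun r => X i i' * Phi (delta_mx i0 i') r j)).
apply: eq_bigr => r _.
by rewrite tensmxE !mxE mxtens_indexK /= mulrCA mulrA (eq_sym r).
Qed.

End Amplification.

Section TensorIntertwiner.
Variables (C : numClosedFieldType) (n m a b : nat).
Variables (Z : 'M[C]_((n * a) * (m * b), n * m)) (i0 : 'I_n) (j0 : 'I_m).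
Hypothesis ZP : forall (X : 'M[C]_n) (Y : 'M[C]_m),
  Z *m (X *t Y) = ((X *t (1%:M : 'M_a)) *t (Y *t (1%:M : 'M_b))) *m Z.

(* Intertwining with matrix units forces every column of Z to be a copy of
   its (i0, j0) column, which is supported on the (i0, j0) block. *)
Definition intertwiner_vec : 'cV[C]_(a * b) :=
  \col_l Z (mxtens_index (mxtens_index (i0, (mxtens_unindex l).1),
                          mxtens_index (j0, (mxtens_unindex l).2)))
           (mxtens_index (i0, j0)).

Lemma intertwiner_entry k r l r' k' l' :
  Z (mxtens_index (mxtens_index (k, r), mxtens_index (l, r'))) (mxtens_index (k', l'))
  = ((k == k') && (l == l'))%:R * intertwiner_vec (mxtens_index (r, r')) 0.
Proof.
have /matrixP/(_ (mxtens_index (mxtens_index (i0, r), mxtens_index (j0, r')))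
                 (mxtens_index (k', l'))) := ZP (delta_mx i0 k) (delta_mx j0 l).
rewrite tens_delta_mx mulmx_delta_entry mxtens_index_eq tens_delta1_mulmx_entry => eqZ.
by rewrite -eqZ mxE mxtens_indexK (eq_sym k) (eq_sym l).
Qed.

Lemma intertwinerE (v : 'cV[C]_(n * m)) : Z *m v = reshuffle (v *t intertwiner_vec).
Proof.
apply/matrixP=> i c; rewrite [c]ord1.
case: (mxtens_indexP i) => K L; case: (mxtens_indexP K) => k r; case: (mxtens_indexP L) => l r'.
rewrite /reshuffle !mxE !mxtens_indexK big_mxtens /=.
transitivity (\sum_(k' < n) (k' == k)%:R * \sum_(l' < m) (l' == l)%:R *
    (intertwiner_vec (mxtens_index (r, r')) 0 * v (mxtens_index (k', l')) 0)).
  apply: eq_bigr => k' _; rewrite mulr_sumr; apply: eq_bigr => l' _.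
  by rewrite intertwiner_entry -mulnb natrM !mulrA (eq_sym k) (eq_sym l).
rewrite !big_delta !mxE !mxtens_indexK /= mulrC.
by congr (_ * _); congr (v _ _); apply: val_inj.
Qed.

Lemma intertwiner_vec_unit : isometry_mx Z -> unit_vec intertwiner_vec.
Proof.
move=> /matrixP /(_ (mxtens_index (i0, j0)) (mxtens_index (i0, j0))).
rewrite [RHS]mxE eqxx => Znorm; rewrite /unit_vec /inner -[RHS]Znorm !mxE.
rewrite big_mxtens [RHS]big_mxtens [RHS]big_mxtens.
under [RHS]eq_bigr => k _ do under eq_bigr => r _ do rewrite big_mxtens.
symmetry; transitivity (\sum_(k < n) (k == i0)%:R * \sum_(r < a) \sum_(l < m) (l == j0)%:R *
    \sum_(r' < b) (intertwiner_vec (mxtens_index (r, r')) 0)^* *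
                  intertwiner_vec (mxtens_index (r, r')) 0).
  apply: eq_bigr => k _; rewrite mulr_sumr; apply: eq_bigr => r _.
  rewrite mulr_sumr; apply: eq_bigr => l _; rewrite !mulr_sumr; apply: eq_bigr => r' _.
  rewrite hadjE !intertwiner_entry rmorphM rmorph_nat.
  by case: (k == i0); case: (l == j0); rewrite /= ?(mul0r, mul1r).
rewrite (big_delta i0 (fun _ => _)); apply: eq_bigr => r _.
rewrite (big_delta j0 (fun _ => _)); apply: eq_bigr => r' _.
by rewrite hadjE.
Qed.

End TensorIntertwiner.

Section TensorWithIdentity.
Variables (C : numClosedFieldType) (p q : nat).

Definition tens1r (X : 'M[C]_p) : 'M[C]_(p * q) := X *t 1%:M.
Definition tens1l (Y : 'M[C]_q) : 'M[C]_(p * q) := 1%:M *t Y.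

Lemma tens1r_is_linear : linear tens1r.
Proof. by move=> c X X'; rewrite /tens1r tensmxDl tensmxZl. Qed.
HB.instance Definition _ := GRing.isLinear.Build C _ _ _ tens1r tens1r_is_linear.

Lemma tens1l_is_linear : linear tens1l.
Proof. by move=> c Y Y'; rewrite /tens1l tensmxDr tensmxZr. Qed.
HB.instance Definition _ := GRing.isLinear.Build C _ _ _ tens1l tens1l_is_linear.

Lemma tens1rM X X' : tens1r (X *m X') = tens1r X *m tens1r X'.
Proof. by rewrite /tens1r tensmx_mul mulmx1. Qed.

Lemma tens1lM Y Y' : tens1l (Y *m Y') = tens1l Y *m tens1l Y'.
Proof. by rewrite /tens1l tensmx_mul mulmx1. Qed.

Lemma tens1r1 : tens1r 1%:M = 1%:M.
Proof. exact: tensmx11. Qed.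

Lemma tens1l1 : tens1l 1%:M = 1%:M.
Proof. exact: tensmx11. Qed.

End TensorWithIdentity.

Arguments tens1rM {C p} q.
Arguments tens1lM {C} p {q}.
Arguments tens1r1 {C p q}.
Arguments tens1l1 {C p q}.

Section UnitaryRepresentation.
Variables (C : numClosedFieldType) (gT : finGroupType) (n : nat).
Variable rho : mx_representation C [set: gT] n.

Lemma mx_irr_span : mx_irreducible rho ->
  forall X, exists c : {ffun gT -> C}, X == \sum_g c g *: rho g.
Proof.
move=> rho_irr X.
have /mx_abs_irrP[_ [c cP]] := group_closure_closed_field rho_irr.
exists [ffun g => c g X]; rewrite {1}(cP X) (eq_bigl predT) => [|g]; last by rewrite in_setT.
by apply/eqP/eq_bigr => g _; rewrite ffunE.
Qed.

Lemma repr_mxMT x y : rho (x * y)%g = rho x *m rho y.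
Proof. by rewrite repr_mxM ?in_setT. Qed.

Lemma unitary_repV : unitary_rep rho -> forall x, rho x^-1%g = hadj (rho x).
Proof.
move=> rho_unitary x; have [hadj_rho rho_hadj] := rho_unitary x.
have rho_unit : rho x \in unitmx by case/mulmx1_unit: rho_hadj.
rewrite repr_mxV ?in_setT // -[hadj _]mulmx1 -(mulmxV rho_unit).
by rewrite mulmxA hadj_rho mul1mx.
Qed.

End UnitaryRepresentation.

Section InducedHom.
Variables (C : numClosedFieldType) (gT : finGroupType) (n d N K : nat).
Variables (rho : mx_representation C [set: gT] n) (A : gT -> 'M[C]_d).
Hypotheses (rho_unitary : unitary_rep rho) (rho_irr : mx_irreducible rho)
  (A_unitary : forall g, unitary_mx (A g)).
Variables (jn : {linear 'M[C]_n -> 'M[C]_N}) (jd : {linear 'M[C]_d -> 'M[C]_K}).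
Variable W : 'M[C]_(K, N).
Hypotheses (jnM : forall X Y, jn (X *m Y) = jn X *m jn Y) (jn1 : jn 1%:M = 1%:M)
  (jdM : forall X Y, jd (X *m Y) = jd X *m jd Y) (jd1 : jd 1%:M = 1%:M)
  (jdW_inj : forall M M', jd M *m W = jd M' *m W -> M = M')
  (W_intertwines : forall g, jd (A g) *m W = W *m jn (rho g)).

Let coef X : {ffun gT -> C} := xchoose (mx_irr_span rho_irr X).
Let coefP X : X = \sum_g coef X g *: rho g.
Proof. exact/eqP/(xchooseP (mx_irr_span rho_irr X)). Qed.

(* The choice of coefficients of X in the rho g does not matter, since
   jd M *m W = W *m jn X determines M (induced_hom_unique). *)
Definition induced_hom X : 'M[C]_d := \sum_g coef X g *: A g.

Lemma induced_homP X : jd (induced_hom X) *m W = W *m jn X.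
Proof.
rewrite [in RHS](coefP X) !linear_sum mulmx_suml.
by apply: eq_bigr => g _; rewrite !linearZ /= -scalemxAl W_intertwines.
Qed.

Lemma induced_hom_unique X M : jd M *m W = W *m jn X -> induced_hom X = M.
Proof. by move=> MW; apply: jdW_inj; rewrite induced_homP MW. Qed.

Lemma induced_hom_is_linear : linear induced_hom.
Proof.
move=> c X Y; apply: induced_hom_unique.
by rewrite !linearP /= mulmxDl -scalemxAl !induced_homP.
Qed.
HB.instance Definition _ :=
  GRing.isLinear.Build C _ _ _ induced_hom induced_hom_is_linear.

Lemma induced_homM X Y : induced_hom (X *m Y) = induced_hom X *m induced_hom Y.
Proof.
apply: induced_hom_unique.
by rewrite jdM jnM -mulmxA induced_homP !mulmxA induced_homP.
Qed.

Lemma induced_hom1 : induced_hom 1%:M = 1%:M.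
Proof. by apply: induced_hom_unique; rewrite jn1 jd1 mul1mx mulmx1. Qed.

Lemma induced_hom_rep g : induced_hom (rho g) = A g.
Proof. exact/induced_hom_unique/W_intertwines. Qed.

Lemma induced_hom_hadj_rep g : induced_hom (hadj (rho g)) = hadj (A g).
Proof.
apply: induced_hom_unique.
transitivity (jd (hadj (A g)) *m (W *m jn (rho g)) *m jn (hadj (rho g))).
  by rewrite -!mulmxA -jnM (rho_unitary g).2 jn1 mulmx1.
by rewrite -W_intertwines mulmxA -jdM (A_unitary g).1 jd1 mul1mx.
Qed.

Lemma induced_hom_hadj X : induced_hom (hadj X) = hadj (induced_hom X).
Proof.
rewrite [in LHS](coefP X) hadj_sum linear_sum hadj_sum.
by apply: eq_bigr => g _; rewrite !hadjZ linearZ /= induced_hom_hadj_rep.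
Qed.

End InducedHom.

Section DiagonalBlockUnitary.
Variables (C : numClosedFieldType) (gT : finGroupType) (d : nat) (U : gT -> gT -> 'M[C]_d).
Hypotheses (U_block : block_unitary U) (U_diag : forall g s, g != s -> U g s = 0).

Lemma block_unitary_diag s : unitary_mx (U s s).
Proof.
suff iso : hadj (U s s) *m U s s = 1%:M by split; last exact: mulmx1C.
have := U_block.1 s s; rewrite eqxx scale1r (bigD1 s) //= big1 ?addr0 // => g gs.
by rewrite U_diag // hadj0 mul0mx.
Qed.

Lemma diag_block_hadj_mul s s' g g' : hadj (U g s) *m U g' s'
  = if (g == s) && (g' == s') then hadj (U s s) *m U s' s' else 0.
Proof.
have [->|gs] /= := eqVneq g s; last by rewrite (U_diag gs) hadj0 mul0mx.
by have [->|g's'] //= := eqVneq g' s'; rewrite (U_diag g's') mulmx0.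
Qed.

End DiagonalBlockUnitary.

Section SelfTest.
Variables (C : numClosedFieldType) (gT : finGroupType) (n m : nat).
Variables (rpi : mx_representation C [set: gT] n) (rrho : mx_representation C [set: gT] m).
Variable psi : 'cV[C]_(n * m).
Hypotheses (pi_unitary : unitary_rep rpi) (pi_irr : mx_irreducible rpi)
  (rho_unitary : unitary_rep rrho) (rho_irr : mx_irreducible rrho)
  (psi_cyclic : marginally_cyclic psi).
Variables (dA dB : nat) (E : gT -> gT -> gT -> gT -> 'M[C]_dA)
  (F : gT -> gT -> gT -> gT -> 'M[C]_dB) (xi : 'cV[C]_(dA * dB))
  (U : gT -> gT -> 'M[C]_dA) (V : gT -> gT -> 'M[C]_dB).
Hypotheses (U_block : block_unitary U) (V_block : block_unitary V)
  (EU : forall s s' g g', E s s' g g' = hadj (U g s) *m U g' s')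
  (FV : forall t t' h h', F t t' h h' = hadj (V h t) *m V h' t')
  (xi_fullA : red_density_A xi \in unitmx) (xi_fullB : red_density_B xi \in unitmx)
  (xi_corr : qns_correlation E F xi
             = schur_channel (fun s t => inner ((rpi s *t rrho t) *m psi) psi)).

Lemma model_corrE s s' t t' g g' h h' :
  inner ((E s s' g g' *t F t t' h h') *m xi) xi =
  if [&& g == s, g' == s', h == t & h' == t'] then
    inner ((rpi (s^-1 * s')%g *t rrho (t^-1 * t')%g) *m psi) psi else 0.
Proof. exact: (congr1 (fun f => f s s' t t' g g' h h') xi_corr). Qed.

(* With \sum_h F 1 1 h h = 1, the squared norm of (U g s (x) 1) xi is a sum of
   correlation entries, all of which vanish when g != s. *)
Lemma U_offdiag g s : g != s -> U g s = 0.
Proof.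
move=> gs; apply: (full_rankA_cancel xi_fullA); rewrite tens0mx mul0mx.
apply: inner_hadj_mul_eq0; rewrite hadj_tens hadj1 tensmx_mul mul1mx -EU.
have -> : 1%:M = \sum_h F 1%g 1%g h h.
  by under eq_bigr do rewrite FV; rewrite V_block.1 eqxx scale1r.
rewrite tensmx_sumr -inner_sum.
by apply: big1 => h _; rewrite model_corrE (negPf gs).
Qed.

Lemma V_offdiag h t : h != t -> V h t = 0.
Proof.
move=> ht; apply: (full_rankB_cancel xi_fullB); rewrite tensmx0 mul0mx.
apply: inner_hadj_mul_eq0; rewrite hadj_tens hadj1 tensmx_mul mul1mx -FV.
have -> : 1%:M = \sum_g E 1%g 1%g g g.
  by under eq_bigr do rewrite EU; rewrite U_block.1 eqxx scale1r.
rewrite tensmx_suml -inner_sum.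
by apply: big1 => g _; rewrite model_corrE (negPf ht) !andbF.
Qed.

Local Notation U_unitary := (block_unitary_diag U_block U_offdiag).
Local Notation V_unitary := (block_unitary_diag V_block V_offdiag).

Definition model_vec s t := (U s s *t V t t) *m xi.
Definition ideal_vec s t := (rpi s *t rrho t) *m psi.

Lemma gram_model_ideal s t s' t' :
  hadj (model_vec s t) *m model_vec s' t' = hadj (ideal_vec s t) *m ideal_vec s' t'.
Proof.
have := model_corrE s s' t t' s s' t t'; rewrite !eqxx /= EU FV.
rewrite (diag_block_hadj_mul U_offdiag) (diag_block_hadj_mul V_offdiag) !eqxx /=.
rewrite !repr_mxMT !unitary_repV // => corr.
apply/matrixP=> i j; rewrite !ord1 -!inner_hadj_mul !hadj_tens !tensmx_mul.
exact: corr.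
Qed.

Lemma ideal_vec_span1 v : exists c : gT -> C, v = \sum_t c t *: ideal_vec 1%g t.
Proof.
have [Y ->] := psi_cyclic.2 v; have /eqP-> := xchooseP (mx_irr_span rho_irr Y).
exists (xchoose (mx_irr_span rho_irr Y)); rewrite tensmx_sumr mulmx_suml.
by apply: eq_bigr => t _; rewrite /ideal_vec repr_mx1 tensmxZr scalemxAl.
Qed.

Lemma ideal_vec_span2 v : exists c : gT -> C, v = \sum_s c s *: ideal_vec s 1%g.
Proof.
have [X ->] := psi_cyclic.1 v; have /eqP-> := xchooseP (mx_irr_span pi_irr X).
exists (xchoose (mx_irr_span pi_irr X)); rewrite tensmx_suml mulmx_suml.
by apply: eq_bigr => s _; rewrite /ideal_vec repr_mx1 tensmxZl scalemxAl.
Qed.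

Lemma model_isometry :
  exists2 W : 'M[C]_(dA * dB, n * m), isometry_mx W &
    forall s t, W *m ideal_vec s t = model_vec s t.
Proof.
have span v : exists c : gT * gT -> C, v = \sum_st c st *: ideal_vec st.1 st.2.
  have [c ->] := ideal_vec_span1 v; exists (fun st => (st.1 == 1%g)%:R * c st.2).
  rewrite -(pair_big xpredT xpredT (fun s t => ((s == 1%g)%:R * c t) *: ideal_vec s t)) /=.
  rewrite [RHS](bigD1 1%g) //= [X in _ + X]big1 ?addr0 => [|s /negPf s1].
    by apply: eq_bigr => t _; rewrite eqxx mul1r.
  by apply: big1 => t _; rewrite s1 mul0r scale0r.
have [W W_iso Wy] := gram_isometry (fun st st' => gram_model_ideal st.1 st.2 st'.1 st'.2) span.
by exists W => // s t; exact: (Wy (s, t)).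
Qed.

Section Transport.
Variable W : 'M[C]_(dA * dB, n * m).
Hypotheses (W_iso : isometry_mx W) (W_ideal : forall s t, W *m ideal_vec s t = model_vec s t).

Lemma W_psi : W *m psi = (U 1%g 1%g *t V 1%g 1%g) *m xi.
Proof.
by rewrite -[psi]mul1mx -tensmx11 -(repr_mx1 rpi) -(repr_mx1 rrho) W_ideal.
Qed.

Lemma ideal_vec1_ext p (M M' : 'M[C]_(p, n * m)) :
  (forall t, M *m ideal_vec 1%g t = M' *m ideal_vec 1%g t) -> M = M'.
Proof.
move=> MM'; apply: mulmx_cV_ext => v; have [c ->] := ideal_vec_span1 v.
by rewrite !mulmx_sumr; apply: eq_bigr => t _; rewrite -!scalemxAr MM'.
Qed.

Lemma ideal_vec2_ext p (M M' : 'M[C]_(p, n * m)) :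
  (forall s, M *m ideal_vec s 1%g = M' *m ideal_vec s 1%g) -> M = M'.
Proof.
move=> MM'; apply: mulmx_cV_ext => v; have [c ->] := ideal_vec_span2 v.
by rewrite !mulmx_sumr; apply: eq_bigr => s _; rewrite -!scalemxAr MM'.
Qed.

Definition repA g := U g g *m hadj (U 1%g 1%g).
Definition repB h := V h h *m hadj (V 1%g 1%g).

Lemma repA_unitary g : unitary_mx (repA g).
Proof.
have [U1iso U1co] := U_unitary 1%g; have [Ugiso Ugco] := U_unitary g.
split; rewrite /repA hadjM hadjK !mulmxA.
  by rewrite -(mulmxA (U 1%g 1%g)) Ugiso mulmx1 U1co.
by rewrite -(mulmxA (U g g)) U1iso mulmx1 Ugco.
Qed.

Lemma repB_unitary h : unitary_mx (repB h).
Proof.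
have [V1iso V1co] := V_unitary 1%g; have [Vhiso Vhco] := V_unitary h.
split; rewrite /repB hadjM hadjK !mulmxA.
  by rewrite -(mulmxA (V 1%g 1%g)) Vhiso mulmx1 V1co.
by rewrite -(mulmxA (V h h)) V1iso mulmx1 Vhco.
Qed.

Lemma W_intertwinesA g : tens1r dB (repA g) *m W = W *m tens1r m (rpi g).
Proof.
apply: ideal_vec1_ext => t; rewrite -!mulmxA.
have -> : tens1r m (rpi g) *m ideal_vec 1%g t = ideal_vec g t.
  by rewrite /tens1r /ideal_vec mulmxA tensmx_mul repr_mx1 mulmx1 mul1mx.
rewrite !W_ideal /model_vec mulmxA /tens1r tensmx_mul mul1mx /repA.
by rewrite -mulmxA (U_unitary 1%g).1 mulmx1.
Qed.

Lemma W_intertwinesB h : tens1l dA (repB h) *m W = W *m tens1l n (rrho h).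
Proof.
apply: ideal_vec2_ext => s; rewrite -!mulmxA.
have -> : tens1l n (rrho h) *m ideal_vec s 1%g = ideal_vec s h.
  by rewrite /tens1l /ideal_vec mulmxA tensmx_mul repr_mx1 mulmx1 mul1mx.
rewrite !W_ideal /model_vec mulmxA /tens1l tensmx_mul mul1mx /repB.
by rewrite -mulmxA (V_unitary 1%g).1 mulmx1.
Qed.

Lemma W_cancelA M M' : tens1r dB M *m W = tens1r dB M' *m W -> M = M'.
Proof.
move=> /(congr1 (fun Q => (1%:M *t hadj (V 1%g 1%g)) *m (Q *m psi))).
rewrite /= -!mulmxA W_psi !mulmxA /tens1r !tensmx_mul !mul1mx !mulmx1 (V_unitary 1%g).1.
move=> /(full_rankA_cancel xi_fullA)/(congr1 (mulmx^~ (hadj (U 1%g 1%g)))).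
by rewrite -!mulmxA (U_unitary 1%g).2 !mulmx1.
Qed.

Lemma W_cancelB N N' : tens1l dA N *m W = tens1l dA N' *m W -> N = N'.
Proof.
move=> /(congr1 (fun Q => (hadj (U 1%g 1%g) *t 1%:M) *m (Q *m psi))).
rewrite /= -!mulmxA W_psi !mulmxA /tens1l !tensmx_mul !mul1mx !mulmx1 (U_unitary 1%g).1.
move=> /(full_rankB_cancel xi_fullB)/(congr1 (mulmx^~ (hadj (V 1%g 1%g)))).
by rewrite -!mulmxA (V_unitary 1%g).2 !mulmx1.
Qed.

Definition PhiA := induced_hom repA pi_irr.
Definition PhiB := induced_hom repB rho_irr.
HB.instance Definition _ := GRing.isLinear.Build C _ _ _ PhiA
  (induced_hom_is_linear pi_irr W_cancelA W_intertwinesA).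
HB.instance Definition _ := GRing.isLinear.Build C _ _ _ PhiB
  (induced_hom_is_linear rho_irr W_cancelB W_intertwinesB).

Lemma PhiA_W X : tens1r dB (PhiA X) *m W = W *m tens1r m X.
Proof. exact: (induced_homP pi_irr W_intertwinesA). Qed.
Lemma PhiB_W Y : tens1l dA (PhiB Y) *m W = W *m tens1l n Y.
Proof. exact: (induced_homP rho_irr W_intertwinesB). Qed.

Lemma PhiAM X Y : PhiA (X *m Y) = PhiA X *m PhiA Y.
Proof. exact: (induced_homM pi_irr (tens1rM m) (tens1rM dB) W_cancelA W_intertwinesA). Qed.
Lemma PhiBM X Y : PhiB (X *m Y) = PhiB X *m PhiB Y.
Proof.
exact: (induced_homM rho_irr (tens1lM n) (tens1lM dA) W_cancelB W_intertwinesB).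
Qed.

Lemma PhiA1 : PhiA 1%:M = 1%:M.
Proof. exact: (induced_hom1 pi_irr tens1r1 tens1r1 W_cancelA W_intertwinesA). Qed.
Lemma PhiB1 : PhiB 1%:M = 1%:M.
Proof. exact: (induced_hom1 rho_irr tens1l1 tens1l1 W_cancelB W_intertwinesB). Qed.

Lemma PhiA_hadj X : PhiA (hadj X) = hadj (PhiA X).
Proof.
exact: (induced_hom_hadj pi_unitary pi_irr repA_unitary (tens1rM m) tens1r1
          (tens1rM dB) tens1r1 W_cancelA W_intertwinesA).
Qed.
Lemma PhiB_hadj Y : PhiB (hadj Y) = hadj (PhiB Y).
Proof.
exact: (induced_hom_hadj rho_unitary rho_irr repB_unitary (tens1lM n) tens1l1
          (tens1lM dA) tens1l1 W_cancelB W_intertwinesB).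
Qed.

Lemma PhiA_rep g : PhiA (rpi g) = repA g.
Proof. exact: (induced_hom_rep pi_irr W_cancelA W_intertwinesA). Qed.
Lemma PhiB_rep h : PhiB (rrho h) = repB h.
Proof. exact: (induced_hom_rep rho_irr W_cancelB W_intertwinesB). Qed.

Lemma U1_transport s s' :
  U 1%g 1%g *m (hadj (U s s) *m U s' s') = PhiA (rpi (s^-1 * s')%g) *m U 1%g 1%g.
Proof.
rewrite repr_mxMT unitary_repV // PhiAM PhiA_hadj.
rewrite !PhiA_rep /repA hadjM hadjK.
by rewrite -!mulmxA (U_unitary 1%g).1 mulmx1 !mulmxA.
Qed.

Lemma V1_transport t t' :
  V 1%g 1%g *m (hadj (V t t) *m V t' t') = PhiB (rrho (t^-1 * t')%g) *m V 1%g 1%g.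
Proof.
rewrite repr_mxMT unitary_repV // PhiBM PhiB_hadj.
rewrite !PhiB_rep /repB hadjM hadjK.
by rewrite -!mulmxA (V_unitary 1%g).1 mulmx1 !mulmxA.
Qed.

Variables (i0 : 'I_n) (j0 : 'I_m).

Local Notation ampA := (amplification PhiA i0).
Local Notation ampB := (amplification PhiB j0).

Definition self_test_map := (ampA *t ampB) *m W.

Lemma self_test_mapP X Y :
  self_test_map *m (X *t Y) = ((X *t 1%:M) *t (Y *t 1%:M)) *m self_test_map.
Proof.
have -> : X *t Y = tens1r m X *m tens1l n Y by rewrite tensmx_mul mulmx1 mul1mx.
have WXY : W *m (tens1r m X *m tens1l n Y) = tens1r dB (PhiA X) *m tens1l dA (PhiB Y) *m W.
  by rewrite mulmxA -PhiA_W -mulmxA -PhiB_W mulmxA.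
rewrite /self_test_map -mulmxA WXY /tens1r /tens1l tensmx_mul mulmx1 mul1mx.
rewrite [LHS]mulmxA [in LHS]tensmx_mul (amplificationP PhiAM) (amplificationP PhiBM).
by rewrite -tensmx_mul mulmxA.
Qed.

Lemma self_test_map_iso : isometry_mx self_test_map.
Proof.
rewrite /isometry_mx /self_test_map hadjM hadj_tens mulmxA -(mulmxA (hadj W)) tensmx_mul.
rewrite (amplification_iso PhiAM PhiA1 PhiA_hadj) (amplification_iso PhiBM PhiB1 PhiB_hadj).
by rewrite tensmx11 mulmx1 W_iso.
Qed.

Definition self_test_isoA := ampA *m U 1%g 1%g.
Definition self_test_isoB := ampB *m V 1%g 1%g.

Lemma self_test_isoA_isometry : isometry_mx self_test_isoA.
Proof.
rewrite /isometry_mx /self_test_isoA hadjM -mulmxA (mulmxA (hadj (amplification _ _))).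
by rewrite (amplification_iso PhiAM PhiA1 PhiA_hadj) mul1mx (U_unitary 1%g).1.
Qed.

Lemma self_test_isoB_isometry : isometry_mx self_test_isoB.
Proof.
rewrite /isometry_mx /self_test_isoB hadjM -mulmxA (mulmxA (hadj (amplification _ _))).
by rewrite (amplification_iso PhiBM PhiB1 PhiB_hadj) mul1mx (V_unitary 1%g).1.
Qed.

Lemma self_test_identity s s' g g' t t' h h' :
  (self_test_isoA *t self_test_isoB) *m ((E s s' g g' *t F t t' h h') *m xi)
  = reshuffle ((((if (s == g) && (s' == g') then rpi (s^-1 * s')%g else 0) *t
                 (if (t == h) && (t' == h') then rrho (t^-1 * t')%g else 0)) *m psi)
               *t intertwiner_vec self_test_map i0 j0).
Proof.
rewrite EU FV (diag_block_hadj_mul U_offdiag) (diag_block_hadj_mul V_offdiag).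
rewrite (eq_sym g) (eq_sym g') (eq_sym h) (eq_sym h').
case: ifP => _; last by rewrite !tens0mx !mul0mx mulmx0 tens0mx reshuffle0.
case: ifP => _; last by rewrite !tensmx0 !mul0mx mulmx0 tens0mx reshuffle0.
(* Both sides reduce to (((X (x) 1) ampA U_1) (x) ((Y (x) 1) ampB V_1)) xi. *)
rewrite -(intertwinerE i0 j0 self_test_mapP) [RHS]mulmxA self_test_mapP.
rewrite /self_test_map -!mulmxA W_psi [LHS]mulmxA [in LHS]tensmx_mul.
rewrite /self_test_isoA /self_test_isoB -!mulmxA U1_transport V1_transport !mulmxA.
by rewrite (amplificationP PhiAM) (amplificationP PhiBM) !tensmx_mul.
Qed.

End Transport.

Hypothesis psi_unit : unit_vec psi.

Lemma model_self_test :
  exists (a b : nat) (TA : 'M[C]_(n * a, dA)) (TB : 'M[C]_(m * b, dB)) (xiaux : 'cV[C]_(a * b)),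
    [/\ isometry_mx TA, isometry_mx TB, unit_vec xiaux &
      forall s s' g g' t t' h h',
        (TA *t TB) *m ((E s s' g g' *t F t t' h h') *m xi)
        = reshuffle ((((if (s == g) && (s' == g') then rpi (s^-1 * s')%g else 0) *t
                       (if (t == h) && (t' == h') then rrho (t^-1 * t')%g else 0)) *m psi)
                     *t xiaux)].
Proof.
have [W W_iso W_ideal] := model_isometry.
have [i0 j0] := mxtens_unindex (Ordinal (unit_vec_dim_gt0 psi_unit)).
exists dA, dB, (self_test_isoA W_ideal i0), (self_test_isoB W_ideal j0).
exists (intertwiner_vec (self_test_map W_ideal i0 j0) i0 j0); split.
- exact: self_test_isoA_isometry.
- exact: self_test_isoB_isometry.
- exact: (intertwiner_vec_unit i0 j0 (self_test_mapP W_ideal i0 j0)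
            (self_test_map_iso W_iso W_ideal i0 j0)).
- exact: self_test_identity.
Qed.

End SelfTest.

Theorem theoremp (R : realType) (gT : finGroupType) (n m : nat)
  (rpi : mx_representation R[i] [set: gT] n)
  (rrho : mx_representation R[i] [set: gT] m)
  (psi : 'cV[R[i]]_(n * m)) :
  unitary_rep rpi -> mx_irreducible rpi ->
  unitary_rep rrho -> mx_irreducible rrho ->
  unit_vec psi -> marginally_cyclic psi ->
  (forall X : 'M[R[i]]_(n * m), exists c : gT -> gT -> R[i],
     X = \sum_(s : gT) \sum_(t : gT)
           c s t *: ((rpi s *t rrho t) *m psi *m hadj psi *m hadj (rpi s *t rrho t))) ->
  let u := fun s t : gT => inner ((rpi s *t rrho t) *m psi) psi in
  let Et := fun s s' g g' : gT =>
    if (s == g) && (s' == g') then rpi (s^-1 * s')%g else 0 in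
  let Ft := fun t t' h h' : gT =>
    if (t == h) && (t' == h') then rrho (t^-1 * t')%g else 0 in
  forall (dA dB : nat)
    (E : gT -> gT -> gT -> gT -> 'M[R[i]]_dA)
    (F : gT -> gT -> gT -> gT -> 'M[R[i]]_dB)
    (xi : 'cV[R[i]]_(dA * dB)),
  unitary_model E F xi -> full_rank xi ->
  qns_correlation E F xi = schur_channel u ->
  exists (a b : nat) (TA : 'M[R[i]]_(n * a, dA)) (TB : 'M[R[i]]_(m * b, dB))
         (xiaux : 'cV[R[i]]_(a * b)),
    [/\ isometry_mx TA, isometry_mx TB, unit_vec xiaux &
      forall s s' g g' t t' h h' : gT,
        (TA *t TB) *m ((E s s' g g' *t F t t' h h') *m xi)
        = reshuffle (((Et s s' g g' *t Ft t t' h h') *m psi) *t xiaux)].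
Proof.
move=> pi_unitary pi_irr rho_unitary rho_irr psi_unit psi_cyclic _ u Et Ft dA dB E F xi.
move=> [[U [U_block EU]] [[V [V_block FV]] _]] [xi_fullA xi_fullB] xi_corr.
exact: (model_self_test pi_unitary pi_irr rho_unitary rho_irr psi_cyclic U_block V_block
          EU FV xi_fullA xi_fullB xi_corr psi_unit).
Qed.
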